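(* Assume (A1) and (A2), and let $\bar X\in\mathcal{X}_\star$, $\bar S\in\mathcal{S}_\star$, $G\in\mathbb{S}^n$ and $\epsilon\ge0$. (1) If $\|\mathcal{P}G\|_F\le\epsilon$ and $\langle G,\bar S\rangle=0$, then $|\langle G,S\rangle|\le\|S-\bar S\|_F\,\epsilon$ for all $S\in\mathcal{S}_\star$. (2) If $\|\mathcal{P}^\perp G\|_F\le\epsilon$ and $\langle G,\bar X\rangle=0$, then $|\langle G,X\rangle|\le\|X-\bar X\|_F\,\epsilon$ for all $X\in\mathcal{X}_\star$.
   Context: Notation: $\mathbb{S}^n$ is the space of real symmetric $n\times n$ matrices with $\langle A,B\rangle=\mathrm{tr}(AB)$ and Frobenius norm $\|\cdot\|_F$. SDP data $C,A_1,\dots,A_m\in\mathbb{S}^n$, $b\in\mathbb{R}^m$ define $\mathcal{A}X:=(\langle A_i,X\rangle)_i$ and $\mathcal{A}^*y:=\sum_iy_iA_i$. A KKT point is $(X,y,S)$ with $\mathcal{A}X=b$, $\mathcal{A}^*y+S=C$, $X,S\succeq0$, $\langle X,S\rangle=0$. $\mathcal{X}_\star$, $\mathcal{S}_\star$ are the sets of $X$, resp. $S$, in KKT points. (A1) $\mathcal{A}$ is surjective. (A2) Some KKT point $(X_{sc},y_{sc},S_{sc})$ has $\mathrm{rank}X_{sc}+\mathrm{rank}S_{sc}=n$. $\mathcal{P}:=\mathcal{A}^*(\mathcal{A}\mathcal{A}^* )^{-1}\mathcal{A}$ and $\mathcal{P}^\perp:=\mathrm{Id}-\mathcal{P}$.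 *)

From HB Require Import structures.
From mathcomp Require Import all_boot all_order all_algebra.
Set Implicit Arguments. Unset Strict Implicit. Unset Printing Implicit Defensive.
Import Order.TTheory GRing.Theory Num.Theory.
Local Open Scope ring_scope.

Section SDP.
Variable R : rcfType.

Definition symmx n (A : 'M[R]_n) : Prop := A^T = A.

Definition psdmx n (A : 'M[R]_n) : Prop :=
  symmx A /\ forall x : 'cV[R]_n, 0 <= (x^T *m A *m x) 0 0.

Definition inner n (A B : 'M[R]_n) : R := \tr (A *m B).

Definition frob n (A : 'M[R]_n) : R := Num.sqrt (\tr (A^T *m A)).

Definition opA m n (As : 'I_m -> 'M[R]_n) (X : 'M[R]_n) : 'cV[R]_m :=
  \col_i inner (As i) X.

Definition opAt m n (As : 'I_m -> 'M[R]_n) (y : 'cV[R]_m) : 'M[R]_n :=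
  \sum_i y i 0 *: As i.

(* matrix of A Aadj : (A Aadj y) = gramA *m y *)
Definition gramA m n (As : 'I_m -> 'M[R]_n) : 'M[R]_m :=
  \matrix_(i, j) inner (As i) (As j).

Definition projP m n (As : 'I_m -> 'M[R]_n) (G : 'M[R]_n) : 'M[R]_n :=
  opAt As (invmx (gramA As) *m opA As G).

Definition projPperp m n (As : 'I_m -> 'M[R]_n) (G : 'M[R]_n) : 'M[R]_n :=
  G - projP As G.

(* (A1): A : S^n -> R^m is surjective *)
Definition opA_surj m n (As : 'I_m -> 'M[R]_n) : Prop :=
  forall v : 'cV[R]_m, exists X : 'M[R]_n, symmx X /\ opA As X = v.

Definition KKT m n (C : 'M[R]_n) (As : 'I_m -> 'M[R]_n) (b : 'cV[R]_m)
  (X : 'M[R]_n) (y : 'cV[R]_m) (S : 'M[R]_n) : Prop :=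
  [/\ opA As X = b, opAt As y + S = C, psdmx X, psdmx S & inner X S = 0].

Definition Xstar m n C (As : 'I_m -> 'M[R]_n) b (X : 'M[R]_n) : Prop :=
  exists y S, KKT C As b X y S.

Definition Sstar m n C (As : 'I_m -> 'M[R]_n) b (S : 'M[R]_n) : Prop :=
  exists X y, KKT C As b X y S.

(* (A2): strictly complementary KKT point *)
Definition strict_compl m n C (As : 'I_m -> 'M[R]_n) b : Prop :=
  exists X y S, KKT C As b X y S /\ (\rank X + \rank S)%N = n.

End SDP.

From HB Require Import structures.
From mathcomp Require Import all_boot all_order all_algebra.
From mathcomp Require Import ring lra.
Set Implicit Arguments. Unset Strict Implicit. Unset Printing Implicit Defensive.
Import Order.TTheory GRing.Theory Num.Theory.
Local Open Scope ring_scope.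

(* Both bounds are the Cauchy-Schwarz inequality for the trace inner product,
   after G has been replaced by one of its two projections.  Two dual optimal
   slacks differ by an element A^* z of the range of A^*, on which <G, .> only
   sees P G because A P G = A G; two primal optimal solutions differ by an
   element of ker A, which is orthogonal to the range of P, so there <G, .>
   only sees P^perp G.  The hypothesis <G, S_bar> = 0 (resp. <G, X_bar> = 0)
   turns <G, S> into <G, S - S_bar>. *)

Section FrobeniusInner.
Variable R : rcfType.

Lemma CauchySchwarz_sum (I : finType) (a b : I -> R) :
  (\sum_i a i * b i) ^+ 2 <= (\sum_i a i ^+ 2) * (\sum_i b i ^+ 2).
Proof.
have sqr_sum : (\sum_i a i * b i) ^+ 2 = \sum_i \sum_j a i * b i * (a j * b j).
  by rewrite expr2 mulr_suml; apply: eq_bigr => i _; rewrite mulr_sumr.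
have mul_sum : (\sum_i a i ^+ 2) * (\sum_i b i ^+ 2) = \sum_i \sum_j a i ^+ 2 * b j ^+ 2.
  by rewrite mulr_suml; apply: eq_bigr => i _; rewrite mulr_sumr.
have expand : \sum_i \sum_j (a i * b j - a j * b i) ^+ 2 =
    \sum_i \sum_j a i ^+ 2 * b j ^+ 2 + \sum_i \sum_j a j ^+ 2 * b i ^+ 2
    - 2 * \sum_i \sum_j a i * b i * (a j * b j).
  rewrite mulr_sumr -big_split -sumrB /=; apply: eq_bigr => i _.
  rewrite mulr_sumr -big_split -sumrB /=; apply: eq_bigr => j _.
  ring.
have swap : \sum_i \sum_j a j ^+ 2 * b i ^+ 2 = \sum_i \sum_j a i ^+ 2 * b j ^+ 2.
  by rewrite exchange_big.
have : 0 <= \sum_i \sum_j (a i * b j - a j * b i) ^+ 2.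
  by apply: sumr_ge0 => i _; apply: sumr_ge0 => j _; exact: sqr_ge0.
rewrite expand swap -sqr_sum -mul_sum; lra.
Qed.

Lemma CauchySchwarz_sum_sqrt (I : finType) (a b : I -> R) :
  `|\sum_i a i * b i| <= Num.sqrt (\sum_i a i ^+ 2) * Num.sqrt (\sum_i b i ^+ 2).
Proof.
rewrite -sqrtr_sqr -sqrtrM; last by apply: sumr_ge0 => i _; exact: sqr_ge0.
exact/ler_wsqrtr/CauchySchwarz_sum.
Qed.

Lemma psumr_sqr_eq0 (I : finType) (f : I -> R) :
  \sum_i f i ^+ 2 = 0 -> forall i, f i = 0.
Proof.
move=> sum0 i; apply/eqP; rewrite -sqrf_eq0; apply/eqP.
exact: (@psumr_eq0P _ _ predT _ (fun j _ => sqr_ge0 (f j)) sum0 i isT).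
Qed.

Variable n : nat.
Implicit Types A B M : 'M[R]_n.

Lemma innerC A B : inner A B = inner B A.
Proof. exact: mxtrace_mulC. Qed.

Lemma innerBl A B M : inner (A - B) M = inner A M - inner B M.
Proof. by rewrite /inner mulmxBl raddfB. Qed.

Lemma innerBr A B M : inner M (A - B) = inner M A - inner M B.
Proof. by rewrite /inner mulmxBr raddfB. Qed.

Lemma innerE A B : inner A B = \sum_(p : 'I_n * 'I_n) A p.1 p.2 * B p.2 p.1.
Proof.
rewrite /inner /mxtrace -(pair_bigA _ (fun i j => A i j * B j i)) /=.
by apply: eq_bigr => i _; rewrite mxE.
Qed.

Lemma inner_trmx_self M : inner M M^T = \sum_(p : 'I_n * 'I_n) M p.1 p.2 ^+ 2.
Proof. by rewrite innerE; apply: eq_bigr => p _; rewrite mxE expr2. Qed.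

Lemma frobE M : frob M = Num.sqrt (\sum_(p : 'I_n * 'I_n) M p.1 p.2 ^+ 2).
Proof. by rewrite -inner_trmx_self /frob mxtrace_mulC. Qed.

Lemma frob_trmx M : frob M^T = frob M.
Proof. by rewrite /frob trmxK mxtrace_mulC. Qed.

Lemma frob_ge0 M : 0 <= frob M.
Proof. exact: sqrtr_ge0. Qed.

Lemma inner_le_frob A B : `|inner A B| <= frob A * frob B.
Proof.
rewrite innerE -(frob_trmx B) !frobE.
rewrite (eq_bigr (fun p => A p.1 p.2 * B^T p.1 p.2)) => [|p _]; last by rewrite mxE.
exact: CauchySchwarz_sum_sqrt.
Qed.

Lemma inner_le_frob_bound A B eps : frob A <= eps -> `|inner A B| <= frob B * eps.
Proof.
move=> Aeps; rewrite mulrC; apply: le_trans (inner_le_frob A B) _.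
by apply: ler_wpM2r => //; exact: frob_ge0.
Qed.

Lemma symmx_inner_self_eq0 M : symmx M -> inner M M = 0 -> M = 0.
Proof.
move=> symM; rewrite -{2}symM inner_trmx_self => /psumr_sqr_eq0 M0.
by apply/matrixP => i j; rewrite mxE (M0 (i, j)).
Qed.

End FrobeniusInner.

Section SDPOperators.
Variables (R : rcfType) (m n : nat) (As : 'I_m -> 'M[R]_n).
Variables (C : 'M[R]_n) (b : 'cV[R]_m).

Lemma inner_opAt y X : inner (opAt As y) X = \sum_i y i 0 * opA As X i 0.
Proof.
rewrite /inner /opAt mulmx_suml raddf_sum /=; apply: eq_bigr => i _.
by rewrite -scalemxAl mxtraceZ mxE.
Qed.

Lemma inner_opAt_eq y X Y :
  opA As X = opA As Y -> inner (opAt As y) X = inner (opAt As y) Y.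
Proof. by move=> XY; rewrite !inner_opAt XY. Qed.

Lemma opA_opAt y : opA As (opAt As y) = gramA As *m y.
Proof.
apply/matrixP => i j; rewrite !mxE (ord1 j) innerC inner_opAt.
by apply: eq_bigr => k _; rewrite !mxE innerC mulrC.
Qed.

Lemma trmx_gramA : (gramA As)^T = gramA As.
Proof. by apply/matrixP => i j; rewrite !mxE innerC. Qed.

Lemma symmx_opAt y : (forall i, symmx (As i)) -> symmx (opAt As y).
Proof.
move=> symA; rewrite /symmx /opAt raddf_sum /=; apply: eq_bigr => i _.
by rewrite linearZ /= symA.
Qed.

Lemma gramA_unit : (forall i, symmx (As i)) -> opA_surj As -> gramA As \in unitmx.
Proof.
move=> symA surjA; rewrite -row_free_unit; apply: inj_row_free => v vG0.
have opA_M0 : opA As (opAt As v^T) = 0.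
  by rewrite opA_opAt -trmx_gramA -trmx_mul vG0 trmx0.
have M0 : opAt As v^T = 0.
  apply: symmx_inner_self_eq0; first exact: symmx_opAt.
  by rewrite inner_opAt opA_M0 big1 // => i _; rewrite !mxE mulr0.
have [X [_ XvT]] := surjA v^T.
have : inner (opAt As v^T) X = \sum_i v^T i 0 ^+ 2.
  by rewrite inner_opAt XvT; apply: eq_bigr => i _; rewrite expr2.
rewrite M0 /inner mul0mx mxtrace0 => /esym /psumr_sqr_eq0 v0.
by apply: trmx_inj; rewrite trmx0; apply/matrixP => i j; rewrite (ord1 j) v0 mxE.
Qed.

Lemma opA_projP G :
  gramA As \in unitmx -> opA As (projP As G) = opA As G.
Proof. by move=> unitG; rewrite /projP opA_opAt mulmxA mulmxV ?mul1mx. Qed.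

Lemma Sstar_opAt S : Sstar C As b S -> exists y, S = C - opAt As y.
Proof. by case=> [X [y [_ <- _ _ _]]]; exists y; rewrite addrC addKr. Qed.

Lemma Xstar_opA X : Xstar C As b X -> opA As X = b.
Proof. by case=> [y [S [<- _ _ _ _]]]. Qed.

Lemma inner_projP_Sstar G S Sb : gramA As \in unitmx ->
  Sstar C As b S -> Sstar C As b Sb ->
  inner G (S - Sb) = inner (projP As G) (S - Sb).
Proof.
move=> unitG /Sstar_opAt[y ->] /Sstar_opAt[yb ->].
have inner_opAtP z : inner G (opAt As z) = inner (projP As G) (opAt As z).
  by rewrite innerC [RHS]innerC (inner_opAt_eq z (esym (opA_projP G unitG))).
have -> : C - opAt As y - (C - opAt As yb) = opAt As yb - opAt As y.
  by rewrite opprB addrC addrA subrK.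
by rewrite !innerBr !inner_opAtP.
Qed.

Lemma inner_projPperp_Xstar G X Xb :
  Xstar C As b X -> Xstar C As b Xb ->
  inner G (X - Xb) = inner (projPperp As G) (X - Xb).
Proof.
move=> /Xstar_opA AX /Xstar_opA AXb.
have projP_orth : inner (projP As G) (X - Xb) = 0.
  by rewrite innerBr (inner_opAt_eq _ (etrans AX (esym AXb))) subrr.
by rewrite innerBl projP_orth subr0.
Qed.

End SDPOperators.

Theorem lemma4p3 (R : rcfType) (m n : nat) (C : 'M[R]_n) (As : 'I_m -> 'M[R]_n)
  (b : 'cV[R]_m) :
  symmx C -> (forall i, symmx (As i)) ->
  opA_surj As -> strict_compl C As b ->
  forall (Xb Sb G : 'M[R]_n) (eps : R),
  Xstar C As b Xb -> Sstar C As b Sb -> symmx G -> 0 <= eps ->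
  (frob (projP As G) <= eps -> inner G Sb = 0 ->
     forall S, Sstar C As b S -> `|inner G S| <= frob (S - Sb) * eps) /\
  (frob (projPperp As G) <= eps -> inner G Xb = 0 ->
     forall X, Xstar C As b X -> `|inner G X| <= frob (X - Xb) * eps).
Proof.
move=> _ symA surjA _ Xb Sb G eps Xb_opt Sb_opt _ _; split.
- move=> PG_le GSb0 S S_opt.
  have -> : inner G S = inner G (S - Sb) by rewrite innerBr GSb0 subr0.
  rewrite (inner_projP_Sstar G (gramA_unit symA surjA) S_opt Sb_opt).
  exact: inner_le_frob_bound.
- move=> PpG_le GXb0 X X_opt.
  have -> : inner G X = inner G (X - Xb) by rewrite innerBr GXb0 subr0.
  rewrite (inner_projPperp_Xstar G X_opt Xb_opt).
  exact: inner_le_frob_bound.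
Qed.
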